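(* Let $G=(V,E)$ be a finite, simple, connected graph which is reflective and locally connected. Then $G$ is distance transitive.
   Context: $d$ is the combinatorial distance. Locally connected: for every vertex $v$ the subgraph induced on the neighbors of $v$ is connected. Distance transitive: for all $x,y,x',y'\in V$ with $d(x,y)=d(x',y')$ there is a graph automorphism $\psi$ with $\psi(x)=x'$ and $\psi(y)=y'$. For adjacent $x\sim y$ let $V_x^y=\{v: d(v,x)<d(v,y)\}$, $V^{xy}=\{v:d(v,x)=d(v,y)\}$. A reflection from $x$ to $y$ is a graph automorphism $\phi$ with $\phi\circ\phi=\mathrm{id}$, $\phi(x)=y$, such that the edges between $V_x^y$ and $V_y^x$ are exactly $\{\{x',\phi(x')\}:x'\in V_x^y\}$ and $\phi$ fixes $V^{xy}$ pointwise. A graph is reflective if every edge admits a reflection. *)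

From mathcomp Require Import all_boot.
Set Implicit Arguments. Unset Strict Implicit. Unset Printing Implicit Defensive.

Section Graph.
Variables (T : finType) (e : rel T).

Definition has_walk (n : nat) (x y : T) : bool :=
  [exists p : n.-tuple T, path e x p && (last x p == y)].

(* combinatorial distance: least n with a walk of length n from x to y;
   (shortest paths have length < #|T|; value #|T| only if no path exists) *)
Definition dist (x y : T) : nat :=
  find (fun n => has_walk n x y) (iota 0 #|T|).

Definition simple_graph : Prop := symmetric e /\ irreflexive e.

Definition connected_graph : Prop := forall x y : T, connect e x y.

Definition nbhd_rel (v : T) : rel T := [rel a b | [&& e v a, e v b & e a b]].

Definition locally_connected : Prop :=
  forall v a b : T, e v a -> e v b -> connect (nbhd_rel v) a b.

Definition graph_automorphism (f : T -> T) : Prop :=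
  bijective f /\ forall a b : T, e (f a) (f b) = e a b.

Definition distance_transitive : Prop :=
  forall x y x' y' : T, dist x y = dist x' y' ->
    exists psi : T -> T, graph_automorphism psi /\ psi x = x' /\ psi y = y'.

Definition Vside (x y : T) : {set T} := [set v | dist v x < dist v y].
Definition Vmid (x y : T) : {set T} := [set v | dist v x == dist v y].

Definition reflection (x y : T) (phi : T -> T) : Prop :=
  graph_automorphism phi /\
  (forall v, phi (phi v) = v) /\
  phi x = y /\
      (forall a, a \in Vside x y -> phi a \in Vside y x /\ e a (phi a)) /\
      (forall a b, a \in Vside x y -> b \in Vside y x -> e a b -> b = phi a) /\
  (forall v, v \in Vmid x y -> phi v = v).

Definition reflective : Prop :=
  forall x y : T, e x y -> exists phi : T -> T, reflection x y phi.

End Graph.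

(* Composing reflections along paths makes the automorphism group vertex
   transitive, so it suffices that the stabiliser of x is transitive on every
   sphere around x. By induction on the radius we may assume that y and y' have
   a common neighbour u one step closer to x; local connectivity then joins y
   to y' by a path inside N(u), which we shorten until it is trivial. An edge of
   the path with both ends equidistant from x is absorbed by the reflection
   across it, which fixes x. Otherwise the path has a valley: a vertex w closer
   to x than its predecessor p and not farther than its successor q. If q is as
   close as w, the reflection across qw fixes x and u and maps the rest of the
   path onto a path starting at w. Otherwise w is cut out, either directly or
   by replacing it with the image of q under the reflection across wp; this
   reflection fixes u, and since x lies on the side of w, folding shows that the
   new vertex is no closer to x than q. *)

From mathcomp Require Import all_boot zify.
Set Implicit Arguments. Unset Strict Implicit. Unset Printing Implicit Defensive.

Lemma exists_valley (A : Type) (lv : A -> nat) a w s :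
  lv w < lv a -> lv a <= lv (last w s) ->
  exists s1 v q s2,
    [/\ w :: s = s1 ++ v :: q :: s2, lv v < lv (last a s1) & lv v <= lv q].
Proof.
elim: s a w => [|q s IH] a w /= hwa hlast; first by rewrite leqNgt hwa in hlast.
case: (leqP (lv w) (lv q)) => hwq; first by exists [::], w, q, s.
have [s1 [v [q' [s2 [-> hv hq']]]]] := IH w q hwq (ltnW (leq_trans hwa hlast)).
by exists (w :: s1), v, q', s2.
Qed.

Section Graph.
Variables (T : finType) (e : rel T).
Hypotheses (esym : symmetric e) (eirr : irreflexive e) (econ : connected_graph e).

Local Notation d := (dist e).

Lemma has_walkP n x y :
  reflect (exists p : seq T, [/\ size p = n, path e x p & last x p = y])
          (has_walk e n x y).
Proof.
apply: (iffP existsP) => [[p /andP[hp /eqP hl]] | [p [hs hp hl]]].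
  by exists (val p); rewrite size_tuple.
have hs' : size p == n by apply/eqP.
by exists (Tuple hs'); rewrite /= hp hl eqxx.
Qed.

Lemma has_walk_dist_leq n x y : has_walk e n x y -> d x y <= n.
Proof.
move=> hw; case: (leqP #|T| n) => hn.
  by apply: leq_trans (find_size _ _) _; rewrite size_iota.
rewrite leqNgt; apply/negP => hlt.
by have := before_find 0 hlt; rewrite nth_iota // add0n hw.
Qed.

Lemma has_walk_dist x y : has_walk e (d x y) x y.
Proof.
have /connectP[p hp] := econ x y.
case: (shortenP hp) => p' hp' huniq _ hy.
have hshort : has (fun n => has_walk e n x y) (iota 0 #|T|).
  apply/hasP; exists (size p'); last by apply/has_walkP; exists p'.
  by rewrite mem_iota /=; have := max_card (mem (x :: p')); rewrite (card_uniqP huniq).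
have := nth_find 0 hshort; rewrite nth_iota ?add0n //.
by move: hshort; rewrite has_find size_iota.
Qed.

Lemma dist_adj_leqS a b c : e b c -> d a c <= (d a b).+1.
Proof.
move=> hbc; have /has_walkP[p [hs hp hl]] := has_walk_dist a b.
apply: has_walk_dist_leq; apply/has_walkP; exists (rcons p c).
by rewrite size_rcons hs rcons_path hp hl hbc last_rcons.
Qed.

Lemma distxx x : d x x = 0.
Proof. by apply/eqP; rewrite -leqn0; apply: has_walk_dist_leq; apply/has_walkP; exists [::]. Qed.

Lemma dist_eq0 x y : d x y = 0 -> x = y.
Proof.
move=> h; have := has_walk_dist x y; rewrite h.
by case/has_walkP=> -[|c p] [].
Qed.

Lemma dist1P x y : reflect (d x y = 1) (e x y).
Proof.
apply: (iffP idP) => [hxy | h1].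
  have : d x y <= 1 by apply: has_walk_dist_leq; apply/has_walkP; exists [:: y]; rewrite /= hxy.
  by case: (d x y =P 0) => [/dist_eq0 exy|]; [rewrite exy eirr in hxy | lia].
have := has_walk_dist x y; rewrite h1.
case/has_walkP=> p [hs hp <-].
by case: p hs hp => [|c [|]] //= _; rewrite andbT.
Qed.

Lemma dist_prev x y n : d x y = n.+1 -> exists2 z, e z y & d x z = n.
Proof.
move=> hxy; have := has_walk_dist x y; rewrite hxy.
case/has_walkP=> p [hs hpath hl]; case/lastP: p hs hpath hl => [|p c] //.
rewrite size_rcons rcons_path last_rcons => -[hs] /andP[hp hc] hcy.
exists (last x p); first by rewrite -hcy.
have : d x (last x p) <= n by apply: has_walk_dist_leq; apply/has_walkP; exists p.
by have := dist_adj_leqS x hc; rewrite hcy hxy; lia.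
Qed.

Definition weak_hom (f : T -> T) : Prop :=
  forall v v', e v v' -> (f v == f v') || e (f v) (f v').

Lemma dist_lazy_path y z s : path (fun a b => (a == b) || e a b) z s ->
  d y (last z s) <= d y z + size s.
Proof.
elim: s z => [|c s IH] z /=; first by rewrite addn0.
move=> /andP[hzc hs]; apply: leq_trans (IH _ hs) _.
rewrite addnS -addSn leq_add2r.
by case/orP: hzc => [/eqP <- | hzc]; [exact: leqnSn | exact: dist_adj_leqS].
Qed.

Lemma weak_hom_dist f a b : weak_hom f -> d (f a) (f b) <= d a b.
Proof.
move=> hf; have /has_walkP[p [<- hp <-]] := has_walk_dist a b.
rewrite -last_map; apply: leq_trans (dist_lazy_path (f a) _) _.
  by rewrite path_map; exact: sub_path hp.
by rewrite distxx size_map.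
Qed.

Lemma aut_dist h x y : graph_automorphism e h -> d (h x) (h y) = d x y.
Proof.
case=> [[g hg gh] he]; apply/eqP; rewrite eqn_leq; apply/andP; split.
  by apply: weak_hom_dist => v v' hvv'; rewrite he hvv' orbT.
rewrite -{1}(hg x) -{1}(hg y); apply: weak_hom_dist => v v' hvv'.
by rewrite -he !gh hvv' orbT.
Qed.

Lemma aut_id : graph_automorphism e id.
Proof. by split => //; exists id. Qed.

Lemma aut_comp f g : graph_automorphism e f -> graph_automorphism e g ->
  graph_automorphism e (f \o g).
Proof.
case=> hf hfe [hg hge]; split; first exact: bij_comp.
by move=> a b /=; rewrite hfe hge.
Qed.

Lemma aut_nbhd_path h u a s : graph_automorphism e h -> h u = u ->
  path (nbhd_rel e u) (h a) (map h s) = path (nbhd_rel e u) a s.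
Proof.
case=> _ he hu; rewrite path_map; apply: eq_path => b c /=.
by rewrite /nbhd_rel /= -{1 2}hu !he.
Qed.

Section Reflection.
Variables (w p : T) (phi : T -> T).
Hypothesis hphi : reflection e w p phi.

Lemma reflection_fix v : d v w = d v p -> phi v = v.
Proof. by case: hphi => _ [_ [_ [_ [_ hmid]]]] hv; apply: hmid; rewrite inE hv. Qed.

Lemma reflection_fix_common_nbr v : e v w -> e v p -> phi v = v.
Proof. by move=> /dist1P hw /dist1P hp; apply: reflection_fix; rewrite hw hp. Qed.

Lemma reflection_fold : weak_hom (fun v => if v \in Vside e p w then phi v else v).
Proof.
have [[_ he] [hinv [_ [_ [hcross hmid]]]]] := hphi.
have mixed v v' : v \in Vside e p w -> v' \notin Vside e p w -> e v v' ->
    (phi v == v') || e (phi v) v'.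
  move=> hv hv' hvv'.
  have : (v' \in Vmid e w p) || (v' \in Vside e w p).
    by move: hv'; rewrite !inE -leqNgt leq_eqVlt.
  case/orP=> [hm | hw].
    by rewrite -(hmid _ hm) he hvv' orbT.
  by rewrite (hcross v' v hw hv) ?hinv ?eqxx // esym.
move=> v v' hvv'; case: ifP => hv; case: ifP => hv'.
- by rewrite he hvv' orbT.
- by apply: mixed; rewrite ?hv'.
- by rewrite eq_sym esym; apply: mixed; rewrite ?hv // esym.
- by rewrite hvv' orbT.
Qed.

Lemma reflection_dist_leq y z :
  y \in Vside e w p -> z \in Vside e w p -> d y z <= d y (phi z).
Proof.
move=> hy hz; have [_ [hinv [_ [hside _]]]] := hphi.
set f := fun v => if v \in Vside e p w then phi v else v.
have fy : f y = y.
  by rewrite /f ifF //; apply/negbTE; move: hy; rewrite !inE -leqNgt; exact: ltnW.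
have fz : f (phi z) = z by rewrite /f (proj1 (hside z hz)) hinv.
by rewrite -{1}fy -{1}fz; apply: weak_hom_dist reflection_fold.
Qed.

End Reflection.

Definition stab_orbit (x a b : T) : Prop :=
  exists h, [/\ graph_automorphism e h, h x = x & h a = b].

Lemma stab_orbit_refl x a : stab_orbit x a a.
Proof. by exists id; split => //; exact: aut_id. Qed.

Lemma stab_orbit_trans x a b c : stab_orbit x a b -> stab_orbit x b c -> stab_orbit x a c.
Proof.
case=> g [hg gx ga] [h [hh hx hb]].
by exists (h \o g); split; [exact: aut_comp | rewrite /= gx | rewrite /= ga].
Qed.

Lemma stab_orbit_dist x a b : stab_orbit x a b -> d x a = d x b.
Proof. by case=> h [hh hx <-]; rewrite -{2}hx aut_dist. Qed.

Lemma reflection_stab_orbit w p phi x v :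
  reflection e w p phi -> d x w = d x p -> stab_orbit x v (phi v).
Proof. by move=> hphi hx; exists phi; split; [exact: hphi.1 | exact: reflection_fix hphi _ hx |]. Qed.

Section Reflective.
Hypothesis hrefl : reflective e.

Lemma reflective_vertex_transitive a b : exists2 h, graph_automorphism e h & h a = b.
Proof.
have /connectP[p hp ->] := econ a b.
elim: p a hp => [|c p IH] a /=; first by exists id; first exact: aut_id.
case/andP=> hac hp; have [phi [hphi [_ [phi_a _]]]] := hrefl hac.
have [h hh hc] := IH c hp.
by exists (h \o phi); [exact: aut_comp | rewrite /= phi_a].
Qed.

Section NbhdPath.
Variables x u : T.
Let K := (d x u).+1.

(* A neighbour [v] of [u] has [d x v <= K], so [K - d x v] does not truncate.
   Each vertex costs at least one, and less the farther it is from [x]: every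
   rerouting below deletes a vertex or moves one away from [x]. *)
Definition weight (s : seq T) : nat := sumn [seq (K - d x v).+1 | v <- s].

Lemma weight_cons v s : weight (v :: s) = (K - d x v).+1 + weight s.
Proof. by []. Qed.

Lemma weight_cat s1 s2 : weight (s1 ++ s2) = weight s1 + weight s2.
Proof. by rewrite /weight map_cat sumn_cat. Qed.

Lemma weight_aut h s : graph_automorphism e h -> h x = x -> weight (map h s) = weight s.
Proof.
move=> hh hx; rewrite /weight -map_comp; congr sumn.
by apply: eq_map => v /=; rewrite -{1}hx aut_dist.
Qed.

Lemma nbhd_dist_leq v : e u v -> d x v <= K.
Proof. exact: dist_adj_leqS. Qed.

Definition lighter_route (p : T) (s s' : seq T) : Prop :=
  [/\ path (nbhd_rel e u) p s', weight s' < weight s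
    & stab_orbit x (last p s') (last p s)].

Lemma reroute_flat p w q s : path (nbhd_rel e u) p (w :: q :: s) ->
  d x q = d x w -> exists s', lighter_route p (w :: q :: s) s'.
Proof.
move=> /= /and3P[hpw /and3P[huw huq hwq] hs] hqw.
have [phi hphi] : exists phi, reflection e q w phi by apply: hrefl; rewrite esym.
have [[_ he] [hinv [hq _]]] := hphi.
have hx : phi x = x := reflection_fix hphi hqw.
have hu : phi u = u := reflection_fix_common_nbr hphi huq huw.
exists (w :: map phi s); split.
- by rewrite /= hpw -hq (aut_nbhd_path _ _ hphi.1 hu).
- by rewrite !weight_cons (weight_aut _ hphi.1 hx); lia.
- rewrite /= -hq last_map -[X in stab_orbit _ _ X]hinv.
  exact: reflection_stab_orbit hphi hqw.
Qed.

Lemma reroute_peak p w q s : path (nbhd_rel e u) p (w :: q :: s) ->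
  d x w < d x p -> d x q = (d x w).+1 -> exists s', lighter_route p (w :: q :: s) s'.
Proof.
move=> /= /and3P[/and3P[hup huw hpw] /and3P[_ huq hwq] hs] hwp hqw.
have hwK : d x w < K := leq_trans hwp (nbhd_dist_leq hup).
have [-> | hpq] := eqVneq p q.
  by exists s; split; rewrite ?weight_cons //; [lia | exact: stab_orbit_refl].
case: (boolP (e p q)) => hepq.
  exists (q :: s); split; rewrite ?weight_cons; last exact: stab_orbit_refl.
    by rewrite /= hs /nbhd_rel /= hup huq hepq.
  by lia.
have [phi hphi] : exists phi, reflection e w p phi by apply: hrefl; rewrite esym.
have [[_ he] [_ [hw [hside _]]]] := hphi.
have hq : q \in Vside e w p.
  have /dist1P hqw1 : e q w by rewrite esym.
  have hqp0 : d q p != 0 by apply: contra_neq hpq => /dist_eq0 ->.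
  have hqp1 : d q p != 1 by apply: contraNneq hepq => /dist1P; rewrite esym.
  by rewrite inE hqw1; lia.
have hx : x \in Vside e w p by rewrite inE.
have hfar : d x q <= d x (phi q) := reflection_dist_leq hphi hx hq.
have hu := reflection_fix_common_nbr hphi huw hup.
have hu_phiq : e u (phi q) by rewrite -hu he.
have hp_phiq : e p (phi q) by rewrite -hw he.
have hphiq_q : e (phi q) q by rewrite esym; exact: (hside q hq).2.
exists (phi q :: q :: s); split; last exact: stab_orbit_refl.
- by rewrite /= /nbhd_rel /= hup huq hu_phiq hp_phiq hphiq_q hs.
- by rewrite !weight_cons ltn_add2r ltnS ltn_sub2l // -hqw.
Qed.

Lemma nbhd_path_stab_orbit a s : path (nbhd_rel e u) a s ->
  d x a = K -> d x (last a s) = K -> stab_orbit x a (last a s).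
Proof.
have [n] := ubnP (weight s); elim: n a s => // n IH a [|w s] hn hpath hxa hlast.
  exact: stab_orbit_refl.
have /= /andP[/and3P[hua huw haw] hs] := hpath.
have haw' : d x a <= (d x w).+1 by apply: dist_adj_leqS; rewrite esym.
have [hxw | hwa] : d x w = K \/ d x w < d x a by have := nbhd_dist_leq huw; lia.
  have [phi hphi] := hrefl haw.
  have hlt : weight s < n by rewrite weight_cons in hn; lia.
  have hend := IH w s hlt hs hxw hlast.
  apply: stab_orbit_trans hend; case: (hphi) => _ [_ [<- _]].
  by apply: reflection_stab_orbit hphi _; rewrite hxa hxw.
have hrise : d x a <= d x (last w s) by rewrite hxa -hlast.
have [s1 [v [q [s2 [hsplit hv hq]]]]] := exists_valley (lv := d x) hwa hrise.
rewrite -[last w s]/(last a (w :: s)).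
move: hpath hn hlast; rewrite hsplit cat_path weight_cat last_cat.
set p := last a s1 => /andP[hs1 hvq] hn hlast.
have [s' [hpath' hlighter hend]] : exists s', lighter_route p (v :: q :: s2) s'.
  have /= /and3P[_ /and3P[_ _ hvq_adj] _] := hvq.
  have hqv := dist_adj_leqS x hvq_adj.
  have [hflat | hpeak] : d x q = d x v \/ d x q = (d x v).+1 by lia.
  - exact: reroute_flat hvq hflat.
  - exact: reroute_peak hvq hv hpeak.
have horb : stab_orbit x a (last a (s1 ++ s')).
  apply: IH hxa _.
  - by rewrite weight_cat; lia.
  - by rewrite cat_path hs1.
  - by rewrite last_cat (stab_orbit_dist hend).
by rewrite last_cat in horb; apply: stab_orbit_trans horb hend.
Qed.

End NbhdPath.

Hypothesis hlc : locally_connected e.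

Lemma sphere_stab_orbit k x y y' : d x y = k -> d x y' = k -> stab_orbit x y y'.
Proof.
elim: k y y' => [|k IH] y y' hy hy'.
  by rewrite -(dist_eq0 hy) -(dist_eq0 hy'); exact: stab_orbit_refl.
have [p hpy hp] := dist_prev hy.
have [p' hp'y' hp'] := dist_prev hy'.
have [h [hh hx hp_h]] := IH p p' hp hp'.
have hp'hy : e p' (h y) by rewrite -hp_h hh.2.
have /connectP[s hs hlast] := hlc hp'hy hp'y'.
apply: (@stab_orbit_trans _ _ (h y)); first by exists h.
rewrite hlast; apply: nbhd_path_stab_orbit hs _ _.
- by rewrite -{1}hx (aut_dist _ _ hh) hy hp'.
- by rewrite -hlast hy' hp'.
Qed.

End Reflective.
End Graph.

Theorem lemma2p12 (T : finType) (e : rel T) :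
  simple_graph e -> connected_graph e -> reflective e -> locally_connected e ->
  distance_transitive e.
Proof.
move=> [esym eirr] econ hrefl hlc x y x' y' hxy.
have [g hg gx] := reflective_vertex_transitive econ hrefl x x'.
have hgy : dist e x' (g y) = dist e x' y' by rewrite -{1}gx (aut_dist econ x y hg).
have [h [hh hx' hy']] := sphere_stab_orbit esym eirr econ hrefl hlc hgy erefl.
by exists (h \o g); split; [exact: aut_comp | rewrite /= gx].
Qed.
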